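(* Let $\Gamma$ be a 3-colex and $E$ an $X$-type error on the color code on $\Gamma$. For each color $c\in\{r,b,g,y\}$ let $S_c$ be an $X$-stabilizer generator of the 3D toric code on $\Gamma^{*\setminus c}$. Then there is an $X$-stabilizer $S$ of the color code such that $$\partial E+\sum_c\mathrm{supp}(S_c)=\partial(ES),$$ with sums taken mod 2.
   Context: Colors are $\{r,b,g,y\}$. A 3-colex $\Gamma$ is a 3-dimensional cell complex without boundary in which every vertex is 4-valent and lies in exactly four 3-cells, and whose 3-cells are properly 4-colored: every face lies in exactly two 3-cells, which have different colors. The dual complex $\Gamma^*$ has an $i$-cell for every $(3-i)$-cell of $\Gamma$, with incidences reversed; every 3-cell of $\Gamma^*$ is a tetrahedron. A vertex of $\Gamma^*$ is given the color of the corresponding 3-cell of $\Gamma$, so the four vertices of each tetrahedron have distinct colors. A face of $\Gamma^*$ is a $c$-face if none of its vertices has color $c$. The 3D color code on $\Gamma$ has one qubit per tetrahedron $\nu$ of $\Gamma^*$ and $X$-stabilizer generators $B^X_v=\prod_{\nu\ni v}X_\nu$ for vertices $v$ of $\Gamma^*$; its $X$-stabilizers are products of these. The minor complex $\Gamma^{*\setminus c}$ is obtained from $\Gamma^*$ by deleting all vertices of color $c$ together with all edges and faces incident to them; its faces are the $c$-faces of $\Gamma^*$ and its 3-cells are obtained by merging, for each $c$-vertex, the tetrahedra containing it. The 3D toric code on $\Gamma^{*\setminus c}$ has qubits on faces and $X$-stabilizer generators $\prod_{f\in\partial\mu}X_f$ for 3-cells $\mu$. The support of an operator is the mod-2 formal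 sum (set) of cells on which it acts nontrivially. For $E=\prod_{\nu\in\Omega}X_\nu$, $\partial E=\sum_{\nu\in\Omega}\partial\nu$ (mod 2), where $\partial\nu$ is the set of four faces of the tetrahedron $\nu$. *)

From mathcomp Require Import all_boot.
Set Implicit Arguments. Unset Strict Implicit. Unset Printing Implicit Defensive.

(* The four colours r, b, g, y, encoded as 'I_4 (0 = r, 1 = b, 2 = g, 3 = y). *)
Definition color := 'I_4.

Record dual_colex := DualColex {
  vert : finType;                 (* vertices of Gamma^* = 3-cells of Gamma *)
  face : finType;                 (* faces of Gamma^*    = edges of Gamma   *)
  tet  : finType;                 (* 3-cells of Gamma^*  = vertices of Gamma *)
  col : vert -> color;
  fverts : face -> {set vert};
  tverts : tet -> {set vert};
  tfaces : tet -> {set face};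
  tverts_card : forall t, #|tverts t| = 4;
  tverts_col : forall t, {in tverts t &, injective col};
  tfaces_card : forall t, #|tfaces t| = 4;
  fverts_card : forall f, #|fverts f| = 3;
  tfaces_sub : forall t f, f \in tfaces t -> fverts f \subset tverts t;
  tfaces_inj : forall t, {in tfaces t &, injective fverts};
  (* every face lies in exactly two tetrahedra (no boundary) *)
  face_two_tets : forall f, #|[set t | f \in tfaces t]| = 2
}.

Section Defs.
Variable G : dual_colex.

Definition cface (c : color) (f : face G) : bool :=
  [forall v in fverts f, col v != c].

(* Boundary (mod 2) of the support Omega of an X-error on the color code:
   \partial E = sum_{nu in Omega} \partial nu, mod 2. *)
Definition bdry (Om : {set tet G}) : {set face G} :=
  [set f | odd #|[set t in Om | f \in tfaces t]|].

(* Support of the colour-code X-stabilizer prod_{v in W} B^X_v. *)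
Definition cc_stab_supp (W : {set vert G}) : {set tet G} :=
  [set t | odd #|[set v in W | v \in tverts t]|].

Definition is_cc_Xstab (S : {set tet G}) : Prop :=
  exists W : {set vert G}, S = cc_stab_supp W.

(* In the minor complex Gamma^{*\c}, the 3-cell mu_v associated with a
   c-vertex v is the merge of the tetrahedra containing v; its faces are
   c-faces.  Its (mod 2) cellular boundary is the mod-2 sum of the c-faces
   of the merged tetrahedra.  The support of the toric-code X-stabilizer
   generator prod_{f in \partial mu_v} X_f is this set. *)
Definition tc_gen_supp (c : color) (v : vert G) : {set face G} :=
  [set f | cface c f && odd #|[set t | (v \in tverts t) && (f \in tfaces t)]|].

Definition sum_col (A : color -> {set face G}) : {set face G} :=
  [set f | odd #|[set c : color | f \in A c]|].

Definition symd (T : finType) (A B : {set T}) : {set T} :=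
  [set x | (x \in A) (+) (x \in B)].

End Defs.

From mathcomp Require Import all_boot.

(* Take S to be the product of the vertex generators B^X_{v c}.  Boundary is
   additive mod 2, and the boundary of the star of a vertex w of colour c is
   exactly the generator S_c: a face through w lies in two tetrahedra of the
   star, so it cancels, and a face through another vertex of colour c lies in
   no tetrahedron of the star, since tetrahedra have vertices of distinct
   colours.  What survives are the c-faces, i.e. the boundary of mu_w. *)

Set Implicit Arguments.
Unset Strict Implicit.
Unset Printing Implicit Defensive.

Lemma odd_card_bigaddb (T : finType) (P : pred T) :
  odd #|[set x | P x]| = \big[addb/false]_x P x.
Proof.
rewrite -sum1_card (big_morph odd oddD (erefl : odd 0 = false)) big_mkcond /=.
by apply: eq_bigr => x _; rewrite inE; case: (P x).
Qed.

Lemma odd_card_symd (T : finType) (A B : {set T}) (P : pred T) :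
  odd #|[set x in symd A B | P x]|
  = odd #|[set x in A | P x]| (+) odd #|[set x in B | P x]|.
Proof.
rewrite !odd_card_bigaddb -big_split /=.
by apply: eq_bigr => x _; rewrite inE andb_addl.
Qed.

Section DualColex.

Variable G : dual_colex.

Definition star (w : vert G) : {set tet G} := [set t | w \in tverts t].

Lemma bdry_symd (A B : {set tet G}) :
  bdry (symd A B) = symd (bdry A) (bdry B).
Proof. by apply/setP => f; rewrite !inE odd_card_symd. Qed.

Lemma in_bdry_star (w : vert G) (f : face G) :
  (f \in bdry (star w)) = \big[addb/false]_t ((w \in tverts t) && (f \in tfaces t)).
Proof.
rewrite inE -odd_card_bigaddb.
by congr odd; apply: eq_card => t; rewrite !inE.
Qed.

Lemma bdry_cc_stab_supp (W : {set vert G}) (f : face G) :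
  (f \in bdry (cc_stab_supp W)) = \big[addb/false]_(w in W) (f \in bdry (star w)).
Proof.
rewrite inE odd_card_bigaddb.
under eq_bigr => t _ do rewrite inE odd_card_bigaddb big_distrl /=.
rewrite exchange_big [RHS]big_mkcond; apply: eq_bigr => w _; rewrite in_bdry_star.
by case: (w \in W) => //; rewrite big1.
Qed.

Lemma bdry_star_through (w : vert G) (f : face G) :
  w \in fverts f -> f \notin bdry (star w).
Proof.
move=> wf; rewrite in_bdry_star -odd_card_bigaddb.
suff -> : [set t | (w \in tverts t) && (f \in tfaces t)] = [set t | f \in tfaces t].
  by rewrite face_two_tets.
apply/setP => t; rewrite !inE; case ft: (f \in tfaces t); rewrite ?andbF //=.
by rewrite (subsetP (tfaces_sub ft)).
Qed.

Lemma bdry_star_through_same_col (w u : vert G) (f : face G) :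
  u \in fverts f -> col u = col w -> u != w -> f \notin bdry (star w).
Proof.
move=> uf cuw nuw; rewrite in_bdry_star big1 // => t _.
apply/negbTE/andP => -[wt ft].
by move: nuw; rewrite (tverts_col (subsetP (tfaces_sub ft) _ uf) wt cuw) eqxx.
Qed.

Lemma tc_gen_supp_bdry_star (c : color) (w : vert G) :
  col w = c -> tc_gen_supp c w = bdry (star w).
Proof.
move=> cw; apply/setP => f; rewrite inE.
have [cf | ] := boolP (cface c f); first by rewrite in_bdry_star -odd_card_bigaddb.
rewrite negb_forall_in => /existsP [u /andP [uf /negPn /eqP cu]].
apply/esym/negbTE; have [<- | nuw] := eqVneq u w; first exact: bdry_star_through.
by apply: (bdry_star_through_same_col uf) nuw; rewrite cu cw.
Qed.

Lemma sum_col_tc_gen_supp (v : color -> vert G) :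
  (forall c, col (v c) = c) ->
  sum_col (fun c => tc_gen_supp c (v c)) = bdry (cc_stab_supp (v @: [set: color])).
Proof.
move=> hv; apply/setP => f; rewrite bdry_cc_stab_supp big_imset /=; last first.
  by move=> a b _ _ eq_ab; rewrite -(hv a) -(hv b) eq_ab.
rewrite inE odd_card_bigaddb [RHS]big_mkcond /=.
by apply: eq_bigr => c _; rewrite in_setT tc_gen_supp_bdry_star.
Qed.

End DualColex.

Theorem lemma9 (G : dual_colex) (Om : {set tet G}) (v : color -> vert G)
    (hv : forall c, col (v c) = c) :
  exists S : {set tet G}, is_cc_Xstab S /\
    symd (bdry Om) (sum_col (fun c => tc_gen_supp c (v c))) = bdry (symd Om S).
Proof.
exists (cc_stab_supp (v @: [set: color])); split; first by eexists.
by rewrite bdry_symd sum_col_tc_gen_supp.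
Qed.
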